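(* Let $n$ be a positive integer and let $\mathbb{F}$ be a field with $\operatorname{char}(\mathbb{F})\neq 2$ and $|\mathbb{F}|\geq n^2+1$. Let $\Sigma_n$ denote the set of all $n\times n$ symmetric matrices over $\mathbb{F}$. If $a,b\in\Sigma_n$ satisfy $\det(a+x)=\det(b+x)$ for all $x\in\Sigma_n$, then $a=b$. *)

From mathcomp Require Import all_boot all_algebra.
Set Implicit Arguments. Unset Strict Implicit. Unset Printing Implicit Defensive.
Import GRing.Theory.
Local Open Scope ring_scope.

Definition sym_mx (F : fieldType) (n : nat) (A : 'M[F]_n) : Prop := A^T = A.

(* |F| >= m, allowing F infinite: F contains m pairwise distinct elements. *)
Definition card_ge (F : fieldType) (m : nat) : Prop :=
  exists s : seq F, uniq s /\ size s = m.

From mathcomp Require Import all_boot all_algebra fingroup perm.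
Import GRing.Theory.
Local Open Scope ring_scope.

(* Put d := b - a, so that det (x + d) = det x for every symmetric x. For a
   symmetric involution y and any scalar t this gives
   det y * det (t + y d) = det (t y + d) = t^n det y, so the characteristic
   polynomial of -(y d) agrees with X^n at n distinct points, hence equals X^n,
   and tr (y d) = 0. Taking for y the identity, the reflections 1 - 2 e_ii and
   the transposition matrices then forces d = 0, as 2 != 0. *)

Lemma mxtrace_delta_mull (R : pzRingType) n (i j : 'I_n) (A : 'M[R]_n) :
  \tr (delta_mx i j *m A) = A j i.
Proof.
rewrite /mxtrace (bigD1 i) //= big1 => [|k nk]; last first.
  by rewrite mxE big1 // => l _; rewrite mxE (negbTE nk) mul0r.
rewrite addr0 mxE (bigD1 j) //= big1 => [|l nl]; last first.
  by rewrite mxE (negbTE nl) andbF mul0r.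
by rewrite mxE !eqxx mul1r addr0.
Qed.

Lemma mxtrace_perm_mull (R : pzRingType) n (s : 'S_n) (A : 'M[R]_n) :
  \tr (perm_mx s *m A) = \sum_k A (s k) k.
Proof. by rewrite -row_permE /mxtrace; apply: eq_bigr => k _; rewrite mxE. Qed.

Lemma size_monicB_lt (R : nzRingType) (p q : {poly R}) :
  p \is monic -> q \is monic -> size p = size q -> (size (p - q)%R < size p)%N.
Proof.
move=> mp mq eq_pq.
have p_gt0 : (0 < size p)%N by rewrite size_poly_gt0 monic_neq0.
rewrite -(prednK p_gt0); apply/leq_sizeP => j; rewrite leq_eqVlt => /orP[/eqP <-|].
  by rewrite coefB {2}eq_pq -!lead_coefE (monicP mp) (monicP mq) subrr.
by rewrite prednK // => lt_p_j; rewrite coefB !nth_default ?subrr // -eq_pq.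
Qed.

Lemma horner_char_poly (R : comNzRingType) n (A : 'M[R]_n) (t : R) :
  (char_poly A).[t] = \det (t%:M - A).
Proof.
rewrite /char_poly -horner_evalE -det_map_mx; congr (\det _).
apply/matrixP => i j; rewrite !mxE /= horner_evalE.
by rewrite hornerD hornerN hornerMn hornerX hornerC.
Qed.

Lemma char_poly_eq_Xn (R : idomainType) n (A : 'M[R]_n) (s : seq R) :
  uniq s -> (n <= size s)%N -> {in s, forall t, (char_poly A).[t] = t ^+ n} ->
  char_poly A = 'X^n.
Proof.
move=> uniq_s le_n_s char_s; apply/eqP; rewrite -subr_eq0; apply/eqP.
apply: (roots_geq_poly_eq0 _ uniq_s).
  by apply/allP => t s_t; rewrite rootE hornerD hornerN hornerXn char_s ?subrr.
apply: leq_trans le_n_s; rewrite -ltnS -[n.+1](size_char_poly A).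
by rewrite size_monicB_lt ?char_poly_monic ?monicXn ?size_char_poly ?size_polyXn.
Qed.

Lemma mxtrace_eq0_det_scalarD (R : idomainType) n (A : 'M[R]_n) (s : seq R) :
  (0 < n)%N -> uniq s -> (n <= size s)%N ->
  {in s, forall t, \det (t%:M + A) = t ^+ n} -> \tr A = 0.
Proof.
move=> n_gt0 uniq_s le_n_s det_s.
have char_Xn : char_poly (- A) = 'X^n.
  apply: char_poly_eq_Xn uniq_s le_n_s _ => t s_t.
  by rewrite horner_char_poly opprK det_s.
have := char_poly_trace (- A) n_gt0.
by rewrite char_Xn coefXn ltn_eqF ?prednK // raddfN opprK => <-.
Qed.

Section SymmetricInvolutions.

Variables (F : fieldType) (n : nat).

Lemma mxtrace_invol_mul_eq0 (s : seq F) (d y : 'M[F]_n) :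
  (0 < n)%N -> uniq s -> (n <= size s)%N ->
  (forall x, sym_mx x -> \det (x + d) = \det x) ->
  sym_mx y -> y *m y = 1%:M -> \tr (y *m d) = 0.
Proof.
move=> n_gt0 uniq_s le_n_s det_d sym_y yy.
apply: mxtrace_eq0_det_scalarD n_gt0 uniq_s le_n_s _.
move=> t _; have det_yy : \det y * \det y = 1 by rewrite -det_mulmx yy det1.
have det_y_neq0 : \det y != 0.
  by apply: contra_eq_neq det_yy => ->; rewrite mul0r eq_sym oner_neq0.
have sym_ty : sym_mx (t *: y) by rewrite /sym_mx linearZ /= sym_y.
apply: (mulfI det_y_neq0); rewrite -det_mulmx mulmxDr mul_mx_scalar mulmxA yy mul1mx.
by rewrite det_d // detZ mulrC.
Qed.

Variable d : 'M[F]_n.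
Hypotheses (two_neq0 : 2%:R != 0 :> F) (sym_d : sym_mx d).
Hypothesis mxtrace_invol_d :
  forall y : 'M[F]_n, sym_mx y -> y *m y = 1%:M -> \tr (y *m d) = 0.

Lemma mxtrace_sym_invol_eq0 : d = 0.
Proof.
have tr_d : \tr d = 0.
  by rewrite -[d]mul1mx mxtrace_invol_d ?mulmx1 // /sym_mx tr_scalar_mx.
have diag_d i : d i i = 0.
  pose y : 'M[F]_n := 1%:M - 2%:R *: delta_mx i i.
  have sym_y : sym_mx y.
    by rewrite /sym_mx linearB /= tr_scalar_mx linearZ /= trmx_delta.
  have yy : y *m y = 1%:M.
    rewrite mulmxBl mul1mx mulmxBr mulmx1 -scalemxAl -scalemxAr mul_delta_mx scalerA.
    rewrite -scalerBl -addrA -opprD -scalerDl.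
    by rewrite -natrM addrA -natrD subrr scale0r subr0.
  have := mxtrace_invol_d _ sym_y yy.
  rewrite mulmxBl mul1mx linearB /= -scalemxAl mxtraceZ mxtrace_delta_mull tr_d add0r.
  by move/eqP; rewrite oppr_eq0 mulf_eq0 (negbTE two_neq0) => /eqP.
have offdiag_d i j : i != j -> d i j = 0.
  move=> neq_ij; pose y : 'M[F]_n := perm_mx (tperm i j).
  have sym_y : sym_mx y by rewrite /sym_mx tr_perm_mx tpermV.
  have yy : y *m y = 1%:M by rewrite -perm_mxM tperm2 perm_mx1.
  have := mxtrace_invol_d _ sym_y yy.
  rewrite mxtrace_perm_mull (bigD1 i) // (bigD1 j) 1?eq_sym //= big1; last first.
    by move=> k /andP[neq_ki neq_kj]; rewrite tpermD 1?eq_sym // diag_d.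
  rewrite tpermL tpermR addr0.
  have -> : d j i = d i j by rewrite -[in LHS]sym_d mxE.
  rewrite -mulr2n -mulr_natl.
  by move/eqP; rewrite mulf_eq0 (negbTE two_neq0) => /eqP.
apply/matrixP => i j; rewrite mxE.
by have [<-|/offdiag_d] := eqVneq i j.
Qed.

End SymmetricInvolutions.

Theorem lemma2p1 (F : fieldType) (n : nat) (hn : (0 < n)%N)
  (hchar : (2 \notin [pchar F])%N)
  (hcard : card_ge F (n ^ 2 + 1)%N)
  (a b : 'M[F]_n) (ha : sym_mx a) (hb : sym_mx b)
  (hdet : forall x : 'M[F]_n, sym_mx x -> \det (a + x) = \det (b + x)) :
  a = b.
Proof.
have [s [uniq_s size_s]] := hcard.
have le_n_s : (n <= size s)%N.
  by rewrite size_s addn1 ltnW // ltnS expnS expn1 leq_pmulr.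
have two_neq0 : 2%:R != 0 :> F by move: hchar; rewrite inE.
have sym_ba : sym_mx (b - a) by rewrite /sym_mx linearB /= ha hb.
have det_ba x : sym_mx x -> \det (x + (b - a)) = \det x.
  move=> sym_x; have sym_xa : sym_mx (x - a) by rewrite /sym_mx linearB /= sym_x ha.
  by rewrite addrCA -hdet // addrCA subrr addr0.
apply/eqP; rewrite eq_sym -subr_eq0; apply/eqP.
apply: mxtrace_sym_invol_eq0 two_neq0 sym_ba _ => y sym_y yy.
exact: mxtrace_invol_mul_eq0 hn uniq_s le_n_s det_ba sym_y yy.
Qed.
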